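(* For all $n,m,k\in\mathbb{N}$, \[ \sum_{i=0}^{k}\frac{1}{\binom{n}{i}}=\frac{2^{m}(n+1)}{n+m+1}\sum_{i=0}^{k}\frac{1}{\binom{n+m}{i}}+\sum_{j=1}^{m}\frac{2^{j-1}(n+1)}{n+j+1}\left(\frac{1}{\binom{n+j}{k+1}}-1\right), \] where $k\le n$ so that all binomial coefficients in denominators are nonzero.
   Context: Empty sums are $0$. *)

From HB Require Import structures.
From mathcomp Require Import all_boot all_order all_algebra.

From HB Require Import structures.
From mathcomp Require Import all_boot all_order all_algebra.
From mathcomp Require Import ring.
Import GRing.Theory Num.Theory.
Local Open Scope ring_scope.

(* Writing T(n, k) for the sum of the first k + 1 reciprocals of binomial
   coefficients of order n, the pointwise identity
   1/C(n,i) = (n+1)/(n+2) (1/C(n+1,i) + 1/C(n+1,i+1)) summed over i <= k gives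
   T(n, k) = 2(n+1)/(n+2) T(n+1, k) + (n+1)/(n+2) (1/C(n+1,k+1) - 1).
   Iterating this recursion m times yields the identity. *)

(* With Pascal's rule for C(n+2, i+1), this is [invbin_recr] cleared of denominators. *)
Lemma mul_bin_succ2 (n i : nat) :
  (n.+2 * 'C(n.+1, i) * 'C(n.+1, i.+1) = n.+1 * 'C(n, i) * 'C(n.+2, i.+1))%N.
Proof.
apply/eqP; rewrite -(eqn_pmul2l (ltn0Sn i)); apply/eqP.
have diag1 := mul_bin_diag n.+1 i; have diag2 := mul_bin_diag n.+2 i.
rewrite /= in diag1 diag2.
by rewrite mulnCA -diag1 [in RHS]mulnCA -diag2 mulnC.
Qed.

Section InvBinomialSum.
Context {R : numFieldType}.

Lemma invbin_recr (n i : nat) : (i <= n)%N ->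
  ('C(n, i)%:R : R)^-1 =
  n.+1%:R / n.+2%:R * (('C(n.+1, i)%:R)^-1 + ('C(n.+1, i.+1)%:R)^-1).
Proof.
move=> le_in.
have Cn_neq0 : ('C(n, i)%:R : R) != 0 by rewrite pnatr_eq0 -lt0n bin_gt0.
have Cl_neq0 : ('C(n.+1, i)%:R : R) != 0 by rewrite pnatr_eq0 -lt0n bin_gt0 ltnW.
have Cr_neq0 : ('C(n.+1, i.+1)%:R : R) != 0 by rewrite pnatr_eq0 -lt0n bin_gt0.
have C2_neq0 : ('C(n.+2, i.+1)%:R : R) != 0.
  by rewrite pnatr_eq0 -lt0n bin_gt0 ltnS ltnW.
have key := congr1 (fun x => x%:R : R) (mul_bin_succ2 n i).
rewrite /= !natrM in key.
rewrite (binS n.+1 i) natrD in C2_neq0 key.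
transitivity (n.+1%:R * ('C(n.+1, i.+1)%:R + 'C(n.+1, i)%:R)
              / (n.+1%:R * 'C(n, i)%:R * ('C(n.+1, i.+1)%:R + 'C(n.+1, i)%:R)) : R).
  by field; rewrite C2_neq0 Cn_neq0 nat1r pnatr_eq0.
by rewrite -key; field; rewrite Cl_neq0 Cr_neq0 -natrD pnatr_eq0.
Qed.

Definition invbin_sum (n k : nat) : R := \sum_(0 <= i < k.+1) ('C(n, i)%:R)^-1.

Lemma invbin_sum_recr (n k : nat) : (k <= n)%N ->
  invbin_sum n k =
  2 * n.+1%:R / n.+2%:R * invbin_sum n.+1 k
  + n.+1%:R / n.+2%:R * (('C(n.+1, k.+1)%:R)^-1 - 1).
Proof.
move=> le_kn; rewrite /invbin_sum.
under eq_big_nat => i /andP[_ lt_ik] do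
  rewrite invbin_recr ?(leq_trans (ltnSE lt_ik) le_kn) //.
rewrite -mulr_sumr big_split /=.
have shifted : \sum_(0 <= i < k.+1) ('C(n.+1, i.+1)%:R : R)^-1 =
    \sum_(0 <= i < k.+1) ('C(n.+1, i)%:R)^-1 + ('C(n.+1, k.+1)%:R)^-1 - 1.
  by rewrite -big_nat_recr // [in RHS]big_nat_recl //= bin0 invr1 addrAC subrr add0r.
by rewrite shifted; ring.
Qed.

End InvBinomialSum.

Theorem mainTheorem17 (n m k : nat) (hk : (k <= n)%N) :
  \sum_(0 <= i < k.+1) ('C(n, i)%:R : rat)^-1 =
  (2 ^+ m * (n.+1)%:R / (n + m).+1%:R) *
    \sum_(0 <= i < k.+1) ('C(n + m, i)%:R : rat)^-1
  + \sum_(1 <= j < m.+1)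
      (2 ^+ j.-1 * (n.+1)%:R / (n + j).+1%:R) *
        (('C(n + j, k.+1)%:R : rat)^-1 - 1).
Proof.
rewrite -!/(invbin_sum _ _).
elim: m => [|m IH].
  by rewrite big_geq // addn0 expr0 mul1r divff ?pnatr_eq0 // mul1r addr0.
have le_k_nm : (k <= n + m)%N by rewrite (leq_trans hk) ?leq_addr.
rewrite big_nat_recr //= IH invbin_sum_recr // !addnS exprS.
by field; rewrite -!natrD nat1r !pnatr_eq0 -lt0n bin_gt0 ltnS le_k_nm.
Qed.
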